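(* Let $K$ be a number field and $d\ge 0$. Let $N_0$ be a positive integer such that for every finite field extension $L/K$ with $[L:K]\le d^2$ and every root of unity $\zeta\in L$ one has $\zeta^{N_0}=1$, and put $N\coloneqq N_0$. Let $A\in\mathrm{GL}_d(K)$ and let $V\subseteq K^d$ be a vector subspace. If $V$ is $A^n$-invariant for some $n\ge1$, then $V$ is $A^N$-invariant.
   Context: A subspace $V$ is $B$-invariant if $BV\subseteq V$. *)

From HB Require Import structures.
From mathcomp Require Import all_boot all_order all_algebra all_field.
Set Implicit Arguments. Unset Strict Implicit. Unset Printing Implicit Defensive.
Import GRing.Theory.
Local Open Scope ring_scope.

(* Subspaces of K^d are represented (mxalgebra style) by the row space of a
   square matrix V : 'M[K]_d.  Vectors of K^d are written as rows; a matrix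
   B acting on column vectors v |-> B v acts on rows as w |-> w *m B^T. *)

Definition is_invariant {F : fieldType} {d : nat} (B V : 'M[F]_d) : bool :=
  (V *m B^T <= V)%MS.

Definition is_root_of_unity {F : nzRingType} (z : F) : Prop :=
  exists m : nat, (0 < m)%N /\ z ^+ m = 1.

From Stdlib Require Import Classical.
From HB Require Import structures.
From mathcomp Require Import all_boot all_order all_algebra all_field.
Set Implicit Arguments. Unset Strict Implicit. Unset Printing Implicit Defensive.
Import GRing.Theory Num.Theory.
Local Open Scope ring_scope.

(* Put B := A^T (matrices act on row vectors) and C := B^N0, so that V is stable
   under C^n.  It suffices that C is a polynomial in C^n, which holds as soon as
   deg mxminpoly C <= deg mxminpoly C^n.  Over an algebraic closure, mxminpoly C
   divides (mxminpoly C^n)(X^n), and in characteristic 0 each nonzero mu is a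
   simple root of X^n - mu^n; hence the degree bound holds provided a |-> a^n is
   injective on the eigenvalues of C.  These are the lam^N0 for eigenvalues lam
   of B.  If lam1^(N0 n) = lam2^(N0 n), then lam1/lam2 is a root of unity and an
   eigenvalue of X |-> B^-T X B, so a root of a polynomial of degree d^2 over K;
   it therefore lives in an extension of K of degree <= d^2, and its N0-th power
   is 1, i.e. lam1^N0 = lam2^N0. *)

Lemma trmxX (R : comPzRingType) n (A : 'M[R]_n) m : (A ^+ m)^T = A^T ^+ m.
Proof.
elim: m => [|m IHm]; first by rewrite !expr0 -!idmxE trmx1.
by rewrite exprS -mulmxE trmx_mul IHm mulmxE -exprSr.
Qed.

Lemma horner_mx_comp (R : comNzRingType) n (C : 'M[R]_n.+1) (p q : {poly R}) :
  horner_mx C (p \Po q) = horner_mx (horner_mx C q) p.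
Proof.
elim/poly_ind: p => [|p c IHp]; first by rewrite comp_poly0 !rmorph0.
rewrite comp_polyD comp_polyM comp_polyX comp_polyC !rmorphD !rmorphM /= IHp.
by rewrite !horner_mx_C horner_mx_X.
Qed.

Lemma mxminpoly_dvdp_comp_Xn (F : fieldType) n (C : 'M[F]_n.+1) k :
  mxminpoly C %| mxminpoly (C ^+ k) \Po 'X^k.
Proof.
apply: mxminpoly_min.
by rewrite horner_mx_comp rmorphXn /= horner_mx_X mx_root_minpoly.
Qed.

Lemma horner_mx_expr_eq (F : fieldType) n (C : 'M[F]_n.+1) k :
  (degree_mxminpoly C <= degree_mxminpoly (C ^+ k))%N ->
  exists p, horner_mx (C ^+ k) p = C.
Proof.
move=> le_deg.
have sub_pow : (powers_mx (C ^+ k) (degree_mxminpoly (C ^+ k))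
                <= powers_mx C (degree_mxminpoly C))%MS.
  apply/row_subP => i; rewrite rowK -exprM -[C in C ^+ _]horner_mx_X -rmorphXn.
  exact: horner_mx_mem.
have eq_pow : (powers_mx C (degree_mxminpoly C)
               <= powers_mx (C ^+ k) (degree_mxminpoly (C ^+ k)))%MS.
  have := mxrank_leqif_sup sub_pow; move/geq_leqif.
  by rewrite (eqP (minpoly_mx_free C)) (eqP (minpoly_mx_free (C ^+ k))) le_deg => /esym.
exists (mx_inv_horner (C ^+ k) C); apply: mx_inv_hornerK.
by apply: submx_trans eq_pow; rewrite -[C in mxvec C]horner_mx_X horner_mx_mem.
Qed.

Lemma eigenvalue_expr (F : closedFieldType) n (A : 'M[F]_n) k mu :
  eigenvalue (A ^+ k) mu -> exists2 lam, eigenvalue A lam & lam ^+ k = mu.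
Proof.
case: n => [|n] in A *; first by rewrite /eigenvalue thinmx0 eqxx.
set p := 'X^k - mu%:P; rewrite eigenvalue_poly => eig_mu.
have eig_p : eigenpoly A p.
  have -> : p = ('X - mu%:P) \Po 'X^k by rewrite comp_polyB comp_polyX comp_polyC.
  by rewrite /eigenpoly /kermxpoly horner_mx_comp rmorphXn /= horner_mx_X; exact: eig_mu.
have ker_cop : coprimep p (mxminpoly A) -> kermxpoly A p = 0.
  move=> cop; apply/eqP; rewrite -submx0 -(mxdirect_kermxpoly A cop) sub_capmx.
  by rewrite submx_refl (kermxpoly_min (dvdpp _)) submx1.
have [lam] : exists lam, root (gcdp p (mxminpoly A)) lam.
  by apply/closed_rootP; apply: contraNN eig_p => cop; apply/eqP/ker_cop.
rewrite root_gcd => /andP[p_lam min_lam]; exists lam; first by rewrite eigenvalue_root_min.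
by move: p_lam; rewrite /root !hornerE subr_eq0 => /eqP.
Qed.

Lemma Xn_subC_cofactor_neq0 (R : idomainType) n (a : R) (w : {poly R}) :
  n%:R != 0 :> R -> a != 0 -> 'X^n - (a ^+ n)%:P = w * ('X - a%:P) -> w.[a] != 0.
Proof.
move=> n_neq0 a_neq0 /(congr1 (fun q => q^`().[a])) /=.
rewrite derivM derivXsubC derivB derivXn derivC subr0 !hornerE subrr mulr0 ?add0r ?addr0 ?mulr1.
by rewrite hornerMn hornerXn => <-; rewrite -mulr_natl mulf_neq0 ?expf_neq0.
Qed.

(* Induction on size m: a root mu of m yields the root mu^n of g, and as mu is a
   simple root of X^n - mu^n that no other root of m shares, removing the factors
   X - mu from m and X - mu^n from g preserves divisibility. *)
Lemma size_dvdp_comp_Xn (F : closedFieldType) n (m g : {poly F}) :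
  n%:R != 0 :> F -> g != 0 -> m %| g \Po 'X^n ->
  {in root m, forall a, a != 0} -> {in root m &, injective (fun a => a ^+ n)} ->
  (size m <= size g)%N.
Proof.
move=> n_neq0; have [k] := ubnP (size m); elim: k m g => // k IHk m g.
rewrite ltnS => le_m_k g_neq0 m_dvd m_neq0 m_inj.
have [le_m1|lt1m] := leqP (size m) 1; first by rewrite (leq_trans le_m1) ?size_poly_gt0.
have [mu m_mu] : exists mu, root m mu by apply/closed_rootP; rewrite neq_ltn lt1m orbT.
have [m1 Dm] := factor_theorem _ _ m_mu.
have g_mun : root g (mu ^+ n).
  have : ('X - mu%:P) %| g \Po 'X^n by apply: dvdp_trans m_dvd; rewrite -root_factor_theorem.
  by rewrite -root_factor_theorem /root horner_comp hornerXn.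
have [g1 Dg] := factor_theorem _ _ g_mun.
have Xn_mu : root ('X^n - (mu ^+ n)%:P) mu by rewrite /root !hornerE subrr.
have [w Dw] := factor_theorem _ _ Xn_mu.
have w_mu := Xn_subC_cofactor_neq0 n_neq0 (m_neq0 _ m_mu) Dw.
have m1_neq0 : m1 != 0 by apply: contraTneq lt1m => m10; rewrite Dm m10 mul0r size_poly0.
have g1_neq0 : g1 != 0 by apply: contraNneq g_neq0 => g10; rewrite Dg g10 mul0r.
have m1_root a : root m1 a -> root m a by rewrite Dm rootM => ->.
have cop_m1w : coprimep m1 w.
  apply/negPn/negP => /closed_rootP[a]; rewrite root_gcd => /andP[m1_a w_a].
  have : root ('X^n - (mu ^+ n)%:P) a by rewrite Dw rootM w_a.
  rewrite /root !hornerE subr_eq0 => /eqP/(m_inj _ _ (m1_root _ m1_a) m_mu) a_mu.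
  by rewrite -a_mu (rootP w_a) eqxx in w_mu.
have m1_dvd : m1 %| g1 \Po 'X^n.
  rewrite -(Gauss_dvdpl _ cop_m1w) -(dvdp_mul2r _ _ (monic_neq0 (monicXsubC mu))) -Dm.
  by rewrite -mulrA -Dw; rewrite Dg comp_polyM comp_polyB comp_polyX comp_polyC in m_dvd.
have size_XsubC_mul q c : q != 0 -> size (q * ('X - c%:P)) = (size q).+1.
  by move=> q_neq0; rewrite size_Mmonic ?monicXsubC // size_XsubC addn2.
move: le_m_k; rewrite Dm Dg !size_XsubC_mul // ltnS => le_m1_k.
apply: IHk => // [a /m1_root /m_neq0 // | a b /m1_root m_a /m1_root m_b].
exact: m_inj.
Qed.

Lemma degree_mxminpoly_expr (K : fieldType) (M : closedFieldType)
    (iota : {rmorphism K -> M}) n (C : 'M[K]_n.+1) k :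
  k%:R != 0 :> M ->
  {in eigenvalue (map_mx iota C), forall a, a != 0} ->
  {in eigenvalue (map_mx iota C) &, injective (fun a => a ^+ k)} ->
  (degree_mxminpoly C <= degree_mxminpoly (C ^+ k))%N.
Proof.
move=> k_neq0 eig_neq0 eig_inj.
rewrite -(degree_mxminpoly_map iota) -(degree_mxminpoly_map iota (C ^+ k)).
rewrite -ltnS -size_mxminpoly -size_mxminpoly rmorphXn /=.
have eig_root a : (a \in root (mxminpoly (map_mx iota C))) = eigenvalue (map_mx iota C) a.
  by rewrite unfold_in /= eigenvalue_root_min.
apply: (size_dvdp_comp_Xn k_neq0).
- exact: monic_neq0 (mxminpoly_monic _).
- exact: mxminpoly_dvdp_comp_Xn.
- by move=> a; rewrite eig_root; apply: eig_neq0.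
- by move=> a b; rewrite !eig_root; apply: eig_inj.
Qed.

Lemma irredp_dvdp_map_root (F L : fieldType) (f : {rmorphism F -> L}) (p q : {poly F}) z :
  irreducible_poly p -> q != 0 -> root (map_poly f p) z -> root (map_poly f q) z ->
  p %| q.
Proof.
move=> p_irr q_neq0 p_z q_z.
have gcd_z : root (map_poly f (gcdp p q)) z by rewrite gcdp_map root_gcd p_z q_z.
have gcd_neq1 : size (gcdp p q) != 1%N.
  rewrite -(size_map_poly f) neq_ltn (root_size_gt1 _ gcd_z) ?orbT //.
  by rewrite map_poly_eq0 gcdp_eq0 negb_and q_neq0 orbT.
by rewrite -(eqp_dvdl _ (p_irr _ gcd_neq1 (dvdp_gcdl p q))) dvdp_gcdr.
Qed.

Lemma irredp_factor_map_root (F L : fieldType) (f : {rmorphism F -> L}) (P : {poly F}) z :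
  P != 0 -> root (map_poly f P) z ->
  exists2 p, irreducible_poly p /\ root (map_poly f p) z & (size p <= size P)%N.
Proof.
have [k] := ubnP (size P); elim: k P => // k IHk P; rewrite ltnS => le_P_k P_neq0 P_z.
have [[Q [Q_neq0 Q_z lt_Q_P]] | no_smaller] :=
  classic (exists Q : {poly F}, [/\ Q != 0, root (map_poly f Q) z & (size Q < size P)%N]).
  have [p p_irr le_p_Q] := IHk Q (leq_trans lt_Q_P le_P_k) Q_neq0 Q_z.
  by exists p => //; exact: leq_trans le_p_Q (ltnW lt_Q_P).
exists P => //; split; last exact: P_z.
apply/(subfx_irreducibleP P_z P_neq0) => Q Q_z Q_neq0.
by rewrite leqNgt; apply/negP => lt_Q_P; apply: no_smaller; exists Q.
Qed.

Lemma irredp_map_root_expr_eq1 (F L1 L2 : fieldType) (f1 : {rmorphism F -> L1})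
    (f2 : {rmorphism F -> L2}) (p : {poly F}) z1 z2 j :
  irreducible_poly p -> root (map_poly f1 p) z1 -> root (map_poly f2 p) z2 ->
  z1 ^+ j = 1 -> z2 ^+ j = 1.
Proof.
move=> p_irr p_z1 p_z2 z1j; case: j => [|j] in z1j *; first exact: expr0.
have unity_root (L : fieldType) (f : {rmorphism F -> L}) (z : L) :
    root (map_poly f ('X^(j.+1) - 1)) z = (z ^+ j.+1 == 1).
  by rewrite rmorphB /= map_polyXn rmorph1 /root !hornerE subr_eq0.
have /dvdpP[q Dq] : p %| 'X^(j.+1) - 1.
  apply: (irredp_dvdp_map_root p_irr _ p_z1); first exact/monic_neq0/monicXnsubC.
  by rewrite unity_root z1j.
by apply/eqP; rewrite -(unity_root _ f2) Dq rmorphM rootM p_z2 orbT.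
Qed.

Lemma bounded_degree_root_of_unity_expr (K M : fieldType) (iota : {rmorphism K -> M}) D N :
  (forall L : fieldExtType K, (\dim (fullv : {vspace L}) <= D)%N ->
     forall z : L, is_root_of_unity z -> z ^+ N = 1) ->
  forall (P : {poly K}) z, P != 0 -> (size P <= D.+1)%N -> root (map_poly iota P) z ->
  is_root_of_unity z -> z ^+ N = 1.
Proof.
move=> hN P z P_neq0 le_P_D P_z [m [m_gt0 z_m]].
have [p [p_irr p_z] le_p_P] := irredp_factor_map_root P_neq0 P_z.
have [L dimL [w p_w _]] := irredp_FAdjoin p_irr.
apply: (irredp_map_root_expr_eq1 p_irr p_w p_z); apply: hN.
  by rewrite dimL; move: (leq_trans le_p_P le_P_D); case: (size p).
by exists m; split => //; apply: (irredp_map_root_expr_eq1 p_irr p_z p_w).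
Qed.

(* The matrix of X |-> B^-T X B on mxvec-encoded matrices: if u B = l1 u and
   w B = l2 w, then w^T u is an eigenvector for l1 / l2. *)
Definition eigenratio_mx (F : fieldType) n (B : 'M[F]_n) : 'M[F]_(n * n) :=
  lin_mx (mulmx (invmx B^T)) *m lin_mx (mulmxr B).

Lemma map_eigenratio_mx (F L : fieldType) (f : {rmorphism F -> L}) n (B : 'M[F]_n) :
  map_mx f (eigenratio_mx B) = eigenratio_mx (map_mx f B).
Proof.
rewrite /eigenratio_mx map_mxM; congr (_ *m _); apply: map_lin_mx => X /=.
  by rewrite map_mxM map_invmx map_trmx.
by rewrite map_mxM.
Qed.

Lemma eigenvalue_unitmx_neq0 (F : fieldType) n (B : 'M[F]_n) a :
  B \in unitmx -> eigenvalue B a -> a != 0.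
Proof.
move=> B_unit /eigenvalueP[v vB v_neq0]; apply: contraNneq v_neq0 => a0.
by rewrite -(mulmxK B_unit v) vB a0 scale0r mul0mx.
Qed.

Lemma eigenvalue_eigenratio_mx (F : fieldType) n (B : 'M[F]_n) l1 l2 :
  B \in unitmx -> eigenvalue B l1 -> eigenvalue B l2 -> eigenvalue (eigenratio_mx B) (l1 / l2).
Proof.
move=> B_unit eig_l1 eig_l2; have l2_neq0 := eigenvalue_unitmx_neq0 B_unit eig_l2.
move: eig_l1 eig_l2 => /eigenvalueP[u uB u_neq0] /eigenvalueP[w wB w_neq0].
have BTw : invmx B^T *m w^T = l2^-1 *: w^T.
  have BT_unit : B^T \in unitmx by rewrite unitmx_tr.
  rewrite -[in RHS](mulKmx BT_unit w^T) -trmx_mul wB linearZ /= -scalemxAr.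
  by rewrite scalerA mulVf // scale1r.
apply/eigenvalueP; exists (mxvec (w^T *m u)).
  rewrite /eigenratio_mx mulmxA !mul_vec_lin /= mulmxA BTw -!scalemxAl -mulmxA uB.
  by rewrite -scalemxAr scalerA linearZ mulrC.
have w_free : row_free w by rewrite /row_free rank_rV w_neq0.
rewrite mxvec_eq0 -trmx_eq0 trmx_mul trmxK mulmx_free_eq0 //.
by rewrite trmx_eq0.
Qed.

Section EigenvalueRatios.

Variables (K : fieldType) (d N : nat).
Hypothesis N_gt0 : (0 < N)%N.
Hypothesis hN : forall L : fieldExtType K, (\dim (fullv : {vspace L}) <= d ^ 2)%N ->
  forall z : L, is_root_of_unity z -> z ^+ N = 1.
Variable B : 'M[K]_d.
Hypothesis B_unit : B \in unitmx.

Lemma eigenvalue_ratio_expr (M : fieldType) (iota : {rmorphism K -> M}) l1 l2 :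
  eigenvalue (map_mx iota B) l1 -> eigenvalue (map_mx iota B) l2 ->
  is_root_of_unity (l1 / l2) -> (l1 / l2) ^+ N = 1.
Proof.
move=> eig_l1 eig_l2.
apply: (bounded_degree_root_of_unity_expr (iota := iota) hN (P := char_poly (eigenratio_mx B))).
- by rewrite -size_poly_eq0 size_char_poly.
- by rewrite size_char_poly mulnn.
rewrite map_char_poly map_eigenratio_mx -eigenvalue_root_char.
by rewrite eigenvalue_eigenratio_mx ?map_unitmx.
Qed.

Variables (M : closedFieldType) (iota : {rmorphism K -> M}).

Lemma eigenvalue_expr_neq0 : {in eigenvalue (map_mx iota (B ^+ N)), forall a, a != 0}.
Proof.
move=> a; rewrite rmorphXn => /eigenvalue_expr[l eig_l <-].
by rewrite expf_neq0 // (eigenvalue_unitmx_neq0 _ eig_l) // map_unitmx.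
Qed.

Lemma eigenvalue_expr_inj n : (0 < n)%N ->
  {in eigenvalue (map_mx iota (B ^+ N)) &, injective (fun a => a ^+ n)}.
Proof.
move=> n_gt0 a b; rewrite rmorphXn.
move=> /eigenvalue_expr[l1 eig_l1 <-] /eigenvalue_expr[l2 eig_l2 <-] /=; rewrite -!exprM.
have l2_neq0 : l2 != 0 by rewrite (eigenvalue_unitmx_neq0 _ eig_l2) // map_unitmx.
move=> eq_pow; apply/divr1_eq; rewrite -expr_div_n.
apply: (eigenvalue_ratio_expr eig_l1 eig_l2); exists (N * n)%N.
split; first by rewrite muln_gt0 N_gt0.
by rewrite expr_div_n eq_pow divff // expf_neq0.
Qed.

End EigenvalueRatios.

Lemma number_field_closure (K : fieldExtType rat) : {M : closedFieldType & {rmorphism K -> M}}.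
Proof.
pose Kc : countFieldType :=
  HB.pack K (isCountable.Build K (pcan_pickleK (can_pcan (passmx.rVofK (vbasisP fullv))))).
by have [M [iota _]] := countable_algebraic_closure Kc; exists M.
Qed.

Theorem mainTheorem11 (K : fieldExtType rat) (d N0 : nat)
  (hN0pos : (0 < N0)%N)
  (hN0 : forall (L : fieldExtType K), (\dim (fullv : {vspace L}) <= d ^ 2)%N ->
           forall z : L, is_root_of_unity z -> z ^+ N0 = 1)
  (A : 'M[K]_d) (hA : A \in unitmx) (V : 'M[K]_d)
  (n : nat) (hn : (1 <= n)%N) (hV : is_invariant (A ^+ n) V) :
  is_invariant (A ^+ N0) V.
Proof.
case: d => [|d] in hN0 A hA V hV *; first by rewrite /is_invariant thinmx0 sub0mx.
move: hV; rewrite /is_invariant !trmxX => stable_n.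
have AT_unit : A^T \in unitmx by rewrite unitmx_tr.
have [M iota] := number_field_closure K.
have n_neq0 : n%:R != 0 :> M.
  by rewrite -(rmorph_nat iota) -(rmorph_nat (in_alg K)) !fmorph_eq0 pnatr_eq0 -lt0n.
have le_deg : (degree_mxminpoly (A^T ^+ N0) <= degree_mxminpoly ((A^T ^+ N0) ^+ n))%N.
  apply: (degree_mxminpoly_expr (iota := iota) n_neq0).
    exact: eigenvalue_expr_neq0.
  exact: eigenvalue_expr_inj.
have [p <-] := horner_mx_expr_eq le_deg.
apply: horner_mx_stable; rewrite -exprM mulnC exprM.
by rewrite -[A^T ^+ n]horner_mx_X -rmorphXn horner_mx_stable.
Qed.
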